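(* For real $p\neq 0$, the inequality $2\left( \frac{\tanh x}{x}\right) ^{p}<\left( \frac{x}{\sinh x}\right) ^{4p}+1$ holds for all $x\in(0,\pi/2)$ if and only if $p<0$ or $p\geq 6/5$. *)

From Stdlib Require Export Reals.

From Stdlib Require Import Reals Lra Lia Psatz List Factorial.
From Coquelicot Require Import Coquelicot.
Open Scope R_scope.
Import ListNotations.

(* Put [Y = x coth x > 1] and [K = x^3 cosh x / sinh^3 x < 1]. Since [tanh x / x = 1 / Y]
   and [(x / sinh x)^2 = K / Y], the inequality is equivalent to
   [1 - K^(2p) < (Y^p - 1)^2]. For [p < 0] the left side is negative. For [p >= 6/5],
   Bernoulli's inequality bounds the left side by [2p (1 - K)] and the right side from
   below by [p^2 (Y - 1)^2], and [5 (1 - K) < 3 (Y - 1)^2]. Near [0] one has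
   [Y - 1 ~ x^2/3] and [1 - K ~ x^4/15], so the two sides behave like [2p x^4/15] and
   [p^2 x^4/9]; hence for [0 < p < 6/5] the inequality fails for small [x], and
   [x = (6/5 - p)/5] is small enough.
   The hyperbolic inequalities are proved by writing each difference as an exponential
   polynomial [sum c x^k exp (j x)] whose Taylor coefficients are all nonnegative. *)

(** A term [(c, k, j)] stands for [c * x ^ k * exp (j * x)]. *)
Definition expoly := list (R * nat * R).

Fixpoint expoly_eval (l : expoly) (x : R) : R :=
  match l with
  | [] => 0
  | (c, k, j) :: t => c * (x ^ k * exp (j * x)) + expoly_eval t x
  end.

Definition exp_monomial_coef (j : R) (k n : nat) : R :=
  if Nat.leb k n then j ^ (n - k) / INR (fact (n - k)) else 0.

Fixpoint expoly_coef (l : expoly) (n : nat) : R :=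
  match l with
  | [] => 0
  | (c, k, j) :: t => c * exp_monomial_coef j k n + expoly_coef t n
  end.

Lemma exp_monomial_coef_0 j n : exp_monomial_coef j 0 n = j ^ n / INR (fact n).
Proof. unfold exp_monomial_coef; simpl; rewrite Nat.sub_0_r; reflexivity. Qed.

Lemma exp_monomial_coef_S j k n :
  exp_monomial_coef j (S k) (S n) = exp_monomial_coef j k n.
Proof. reflexivity. Qed.

Lemma is_series_exp_monomial j k x :
  is_series (fun n => exp_monomial_coef j k n * x ^ n) (x ^ k * exp (j * x)).
Proof.
  assert (Hexp : is_pseries (fun n => j ^ n / INR (fact n)) x (exp (j * x))).
  { pose proof (is_exp_Reals (j * x)) as Hseries.
    apply is_pseries_R. apply is_pseries_R in Hseries.
    eapply is_series_ext; [|exact Hseries].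
    intros n; simpl. rewrite Rpow_mult_distr. unfold Rdiv; ring. }
  pose proof (is_pseries_incr_n _ k _ _ Hexp) as Hshift.
  apply is_pseries_R in Hshift. rewrite pow_n_pow in Hshift.
  eapply is_series_ext; [|exact Hshift]. intros n; simpl.
  unfold scal; simpl; unfold mult; simpl.
  rewrite PS_incr_n_simplify. unfold exp_monomial_coef.
  destruct (Compare_dec.le_lt_dec k n) as [Hkn|Hnk].
  - rewrite (proj2 (Nat.leb_le k n) Hkn). reflexivity.
  - rewrite (proj2 (Nat.leb_gt k n) Hnk). unfold zero; simpl; ring.
Qed.

Lemma is_series_expoly l x :
  is_series (fun n => expoly_coef l n * x ^ n) (expoly_eval l x).
Proof.
  induction l as [|[[c k] j] t IH]; simpl.
  - pose proof (is_series_scal 0 _ _ (is_series_exp_monomial 0 0 x)) as Hzero.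
    rewrite (scal_zero_l (K := R_Ring)) in Hzero.
    eapply is_series_ext; [|exact Hzero].
    intros n. unfold scal; simpl; unfold mult; simpl. ring.
  - eapply is_series_ext;
      [|exact (is_series_plus _ _ _ _ (is_series_scal c _ _ (is_series_exp_monomial j k x)) IH)].
    intros n. unfold plus, scal; simpl; unfold mult; simpl. ring.
Qed.

Lemma expoly_ge_coef_pow l x N :
  (forall n, 0 <= expoly_coef l n) -> 0 <= x ->
  expoly_coef l N * x ^ N <= expoly_eval l x.
Proof.
  intros Hcoef Hx.
  pose proof (is_series_expoly l x) as Hseries. apply is_series_Reals in Hseries.
  assert (Hterm : forall n, 0 <= expoly_coef l n * x ^ n)
    by (intros n; apply Rmult_le_pos; [apply Hcoef | apply pow_le; exact Hx]).
  apply Rle_trans with (sum_f_R0 (fun n => expoly_coef l n * x ^ n) N).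
  - destruct N as [|N]; simpl; [lra|].
    pose proof (cond_pos_sum _ N Hterm). lra.
  - apply sum_incr; assumption.
Qed.

Lemma expoly_nonneg l x :
  (forall n, 0 <= expoly_coef l n) -> 0 <= x -> 0 <= expoly_eval l x.
Proof.
  intros Hcoef Hx. apply Rle_trans with (expoly_coef l 0 * x ^ 0).
  - rewrite pow_O, Rmult_1_r. apply Hcoef.
  - apply expoly_ge_coef_pow; assumption.
Qed.

(* Tailored to even or odd expolys, whose coefficients of order [3 + m] vanish for odd [m]. *)
Lemma expoly_coef_nonneg l (F : nat -> R) :
  (forall n, (n < 3)%nat -> 0 <= expoly_coef l n) ->
  (forall m, expoly_coef l (3 + m) * INR (fact (3 + m)) = (1 + (-1) ^ m) * F m) ->
  (forall i, 0 <= F (2 * i)%nat) ->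
  forall n, 0 <= expoly_coef l n.
Proof.
  intros Hlow Hform Heven n.
  destruct (Nat.lt_ge_cases n 3) as [Hn|Hn]; [exact (Hlow n Hn)|].
  replace n with (3 + (n - 3))%nat by lia.
  set (m := (n - 3)%nat).
  pose proof (INR_fact_lt_0 (3 + m)) as Hfact.
  apply (Rmult_le_reg_r (INR (fact (3 + m)))); [exact Hfact|].
  rewrite Rmult_0_l, Hform.
  destruct (Nat.Even_or_Odd m) as [[i ->]|[i ->]].
  - rewrite pow_1_even. apply Rmult_le_pos; [lra | apply Heven].
  - rewrite Nat.add_1_r, pow_1_odd. lra.
Qed.

Lemma exp_1_mul x : exp (1 * x) = exp x.
Proof. f_equal; ring. Qed.

Lemma exp_m1_mul x : exp ((-1) * x) = / exp x.
Proof. rewrite <- exp_Ropp. f_equal; ring. Qed.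

Lemma exp_3_mul x : exp (3 * x) = exp x ^ 3.
Proof. replace (3 * x) with (x + x + x) by ring. rewrite !exp_plus. ring. Qed.

Lemma exp_m3_mul x : exp ((-3) * x) = / exp x ^ 3.
Proof.
  replace ((-3) * x) with (- (3 * x)) by ring.
  rewrite exp_Ropp, exp_3_mul. field. apply Rgt_not_eq, exp_pos.
Qed.

Lemma pow_m3 m : (-3) ^ m = (-1) ^ m * 3 ^ m.
Proof. rewrite <- Rpow_mult_distr. f_equal. lra. Qed.

Ltac expoly_eval_hyperbolic :=
  lazymatch goal with |- expoly_eval ?l _ = _ => unfold l end;
  cbn [expoly_eval]; rewrite ?exp_1_mul, ?exp_m1_mul, ?exp_3_mul, ?exp_m3_mul;
  unfold sinh, cosh; rewrite exp_Ropp;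
  field; apply Rgt_not_eq, exp_pos.

Ltac expoly_coef_closed_form :=
  lazymatch goal with |- expoly_coef ?l (3 + ?m) * _ = _ =>
    unfold l; cbn [expoly_coef Nat.add];
    rewrite !exp_monomial_coef_S, !exp_monomial_coef_0, !fact_simpl, !mult_INR, !S_INR;
    cbn [pow]; rewrite ?pow_m3, pow1;
    pose proof (INR_fact_lt_0 m); pose proof (pos_INR m);
    field; repeat split; lra
  end.

Ltac expoly_coef_low :=
  intros [|[|[|?]]] ?; [..| lia];
  lazymatch goal with |- _ <= expoly_coef ?l _ => unfold l end; cbn [expoly_coef];
  unfold exp_monomial_coef; simpl; field_simplify; lra.

Lemma INR_fact_3_add m :
  INR (fact (3 + m)) = INR (fact m) * (INR m + 1) * (INR m + 2) * (INR m + 3).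
Proof. cbn [Nat.add]. rewrite !fact_simpl, !mult_INR, !S_INR. ring. Qed.

Ltac expoly_coef_value m F :=
  rewrite INR_fact_3_add in F;
  replace (INR (fact m)) with (IZR (Z.of_nat (fact m))) in F
    by (rewrite INR_IZR_INZ; reflexivity);
  cbn [pow Z.of_nat fact Nat.mul Nat.add Pos.of_succ_nat Pos.succ] in F;
  simpl INR in F; lra.

Definition sinh_lt_expoly : expoly :=
  [(1/2, 0%nat, -1); (-1/2, 0%nat, 1); (1/2, 1%nat, -1); (1/2, 1%nat, 1)].

Lemma sinh_lt_expoly_eval x : expoly_eval sinh_lt_expoly x = x * cosh x - sinh x.
Proof. expoly_eval_hyperbolic. Qed.

Lemma sinh_lt_expoly_coef m :
  expoly_coef sinh_lt_expoly (3 + m) * INR (fact (3 + m)) =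
  (1 + (-1) ^ m) * (1 + INR m / 2).
Proof. expoly_coef_closed_form. Qed.

Lemma sinh_lt_expoly_coef_nonneg n : 0 <= expoly_coef sinh_lt_expoly n.
Proof.
  eapply expoly_coef_nonneg; [expoly_coef_low | exact sinh_lt_expoly_coef |].
  intros i; cbv beta. pose proof (pos_INR (2 * i)). lra.
Qed.

Lemma sinh_lt_expoly_coef_3 : expoly_coef sinh_lt_expoly 3 = 1 / 3.
Proof. pose proof (sinh_lt_expoly_coef 0) as F. expoly_coef_value 0%nat F. Qed.

Lemma sinh_lt_x_cosh x : 0 < x -> sinh x < x * cosh x.
Proof.
  intros Hx.
  pose proof (expoly_ge_coef_pow sinh_lt_expoly x 3 sinh_lt_expoly_coef_nonneg
                (Rlt_le _ _ Hx)) as Hge.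
  rewrite sinh_lt_expoly_coef_3, sinh_lt_expoly_eval in Hge.
  assert (0 < x ^ 3) by (apply pow_lt; exact Hx). lra.
Qed.

Definition x_cosh_sub_sinh_le_expoly : expoly :=
  [(-3/2, 0%nat, -1); (3/2, 0%nat, 1); (-3/2, 1%nat, -1); (-3/2, 1%nat, 1);
   (-1/2, 2%nat, -1); (1/2, 2%nat, 1)].

Lemma x_cosh_sub_sinh_le_expoly_eval x :
  expoly_eval x_cosh_sub_sinh_le_expoly x = x ^ 2 * sinh x - 3 * (x * cosh x - sinh x).
Proof. expoly_eval_hyperbolic. Qed.

Lemma x_cosh_sub_sinh_le_expoly_coef m :
  expoly_coef x_cosh_sub_sinh_le_expoly (3 + m) * INR (fact (3 + m)) =
  (1 + (-1) ^ m) * (INR m + INR m ^ 2 / 2).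
Proof. expoly_coef_closed_form. Qed.

Lemma x_cosh_sub_sinh_le x : 0 < x -> 3 * (x * cosh x - sinh x) <= x ^ 2 * sinh x.
Proof.
  intros Hx.
  assert (Hcoef : forall n, 0 <= expoly_coef x_cosh_sub_sinh_le_expoly n).
  { eapply expoly_coef_nonneg; [expoly_coef_low | exact x_cosh_sub_sinh_le_expoly_coef |].
    intros i; cbv beta. pose proof (pos_INR (2 * i)). nra. }
  pose proof (expoly_nonneg _ x Hcoef (Rlt_le _ _ Hx)) as Hge.
  rewrite x_cosh_sub_sinh_le_expoly_eval in Hge. lra.
Qed.

Definition sinh_cube_sub_ge_expoly : expoly :=
  [(-1/8, 0%nat, -3); (3/8, 0%nat, -1); (-3/8, 0%nat, 1); (1/8, 0%nat, 3);
   (-1/2, 3%nat, -1); (-1/2, 3%nat, 1)].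

Lemma sinh_cube_sub_ge_expoly_eval x :
  expoly_eval sinh_cube_sub_ge_expoly x = sinh x ^ 3 - x ^ 3 * cosh x.
Proof. expoly_eval_hyperbolic. Qed.

Lemma sinh_cube_sub_ge_expoly_coef m :
  expoly_coef sinh_cube_sub_ge_expoly (3 + m) * INR (fact (3 + m)) =
  (1 + (-1) ^ m) *
  (27 / 8 * 3 ^ m - ((INR m + 1) * (INR m + 2) * (INR m + 3) + 3 / 4) / 2).
Proof. expoly_coef_closed_form. Qed.

Lemma cubic_le_pow3 m : (4 <= m)%nat ->
  (INR m + 1) * (INR m + 2) * (INR m + 3) + 3 / 4 <= 27 / 4 * 3 ^ m.
Proof.
  induction 1 as [|m Hm IH].
  - simpl. lra.
  - rewrite S_INR. cbn [pow].
    assert (4 <= INR m) by (replace 4 with (INR 4) by (simpl; lra); apply le_INR; exact Hm).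
    nra.
Qed.

Lemma sinh_cube_sub_ge_expoly_coef_7 : expoly_coef sinh_cube_sub_ge_expoly 7 = 1 / 15.
Proof. pose proof (sinh_cube_sub_ge_expoly_coef 4) as F. expoly_coef_value 4%nat F. Qed.

Lemma sinh_cube_sub_ge x : 0 < x -> x ^ 7 / 15 <= sinh x ^ 3 - x ^ 3 * cosh x.
Proof.
  intros Hx.
  assert (Hcoef : forall n, 0 <= expoly_coef sinh_cube_sub_ge_expoly n).
  { eapply expoly_coef_nonneg; [expoly_coef_low | exact sinh_cube_sub_ge_expoly_coef |].
    intros [|[|i]]; cbv beta; [simpl; lra | simpl; lra |].
    pose proof (cubic_le_pow3 (2 * S (S i)) ltac:(lia)). lra. }
  pose proof (expoly_ge_coef_pow _ x 7 Hcoef (Rlt_le _ _ Hx)) as Hge.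
  rewrite sinh_cube_sub_ge_expoly_coef_7, sinh_cube_sub_ge_expoly_eval in Hge. lra.
Qed.

Definition sinh_cube_sub_lt_expoly : expoly :=
  [(1/4, 0%nat, -3); (-3/4, 0%nat, -1); (3/4, 0%nat, 1); (-1/4, 0%nat, 3);
   (-3/4, 1%nat, -3); (3/4, 1%nat, -1); (3/4, 1%nat, 1); (-3/4, 1%nat, 3);
   (-3/8, 2%nat, -3); (-3/8, 2%nat, -1); (3/8, 2%nat, 1); (3/8, 2%nat, 3);
   (5/2, 3%nat, -1); (5/2, 3%nat, 1)].

Lemma sinh_cube_sub_lt_expoly_eval x :
  expoly_eval sinh_cube_sub_lt_expoly x =
  3 * sinh x * (x * cosh x - sinh x) ^ 2 - 5 * (sinh x ^ 3 - x ^ 3 * cosh x).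
Proof. expoly_eval_hyperbolic. Qed.

Lemma sinh_cube_sub_lt_expoly_coef m :
  expoly_coef sinh_cube_sub_lt_expoly (3 + m) * INR (fact (3 + m)) =
  (1 + (-1) ^ m) *
  (81 / 4 + 241 / 8 * INR m + 123 / 8 * INR m ^ 2 + 5 / 2 * INR m ^ 3
   + 9 / 8 * 3 ^ m * (INR m ^ 2 - INR m - 18)).
Proof. expoly_coef_closed_form. Qed.

Lemma sinh_cube_sub_lt_expoly_coef_9 : expoly_coef sinh_cube_sub_lt_expoly 9 = 58 / 945.
Proof. pose proof (sinh_cube_sub_lt_expoly_coef 6) as F. expoly_coef_value 6%nat F. Qed.

Lemma sinh_cube_sub_lt x : 0 < x ->
  5 * (sinh x ^ 3 - x ^ 3 * cosh x) < 3 * sinh x * (x * cosh x - sinh x) ^ 2.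
Proof.
  intros Hx.
  assert (Hcoef : forall n, 0 <= expoly_coef sinh_cube_sub_lt_expoly n).
  { eapply expoly_coef_nonneg; [expoly_coef_low | exact sinh_cube_sub_lt_expoly_coef |].
    intros [|[|[|i]]]; cbv beta; [simpl; lra .. |].
    assert (HM : 6 <= INR (2 * S (S (S i))))
      by (replace 6 with (INR 6) by (simpl; lra); apply le_INR; lia).
    pose proof (pow_le 3 (2 * S (S (S i))) ltac:(lra)).
    set (M := INR (2 * S (S (S i)))) in *.
    assert (0 <= M ^ 2 - M - 18) by nra.
    assert (0 <= 3 ^ (2 * S (S (S i))) * (M ^ 2 - M - 18)) by (apply Rmult_le_pos; lra).
    assert (0 <= M ^ 2) by nra. assert (0 <= M ^ 3) by (apply pow_le; lra).
    lra. }
  pose proof (expoly_ge_coef_pow _ x 9 Hcoef (Rlt_le _ _ Hx)) as Hge.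
  rewrite sinh_cube_sub_lt_expoly_coef_9, sinh_cube_sub_lt_expoly_eval in Hge.
  assert (0 < x ^ 9) by (apply pow_lt; exact Hx). lra.
Qed.

Lemma sinh_pos x : 0 < x -> 0 < sinh x.
Proof. intros Hx. rewrite <- sinh_0. apply sinh_lt, Hx. Qed.

Lemma cosh_pos x : 0 < cosh x.
Proof. unfold cosh. pose proof (exp_pos x). pose proof (exp_pos (- x)). lra. Qed.

Lemma exp_le_inv_one_sub t : t < 1 -> exp t <= / (1 - t).
Proof.
  intros Ht. pose proof (exp_ineq1_le (- t)). pose proof (exp_pos t).
  assert (Hinv : exp t * exp (- t) = 1) by (rewrite <- exp_plus, Rplus_opp_r; apply exp_0).
  apply (Rmult_le_reg_r (1 - t)); [lra|]. rewrite Rinv_l by lra. nra.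
Qed.

Lemma Rpower_inv y q : 0 < y -> Rpower (/ y) q = / Rpower y q.
Proof.
  intros Hy. unfold Rpower. rewrite ln_Rinv by exact Hy. rewrite <- exp_Ropp. f_equal. ring.
Qed.

Lemma Rpower_ge_bernoulli y r : 0 < y -> 1 <= r -> 1 + r * (y - 1) <= Rpower y r.
Proof.
  intros Hy Hr. unfold Rpower. set (u := ln y).
  replace y with (exp u) by (apply exp_ln, Hy).
  assert (Hshift : exp u * (1 + (r * u - u)) <= exp (r * u)).
  { replace (r * u) with (u + (r * u - u)) at 2 by ring. rewrite exp_plus.
    apply Rmult_le_compat_l; [apply Rlt_le, exp_pos | apply exp_ineq1_le]. }
  assert (Htangent : exp u * (1 - u) <= 1).
  { pose proof (exp_ineq1_le (- u)). pose proof (exp_pos u).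
    replace 1 with (exp u * exp (- u)) at 2
      by (rewrite <- exp_plus, Rplus_opp_r; apply exp_0).
    apply Rmult_le_compat_l; lra. }
  assert ((r - 1) * (exp u * (1 - u)) <= (r - 1) * 1) by (apply Rmult_le_compat_l; lra).
  nra.
Qed.

Lemma Rpower_le_inv y q : 0 < y -> 0 <= q -> q * (y - 1) < 1 ->
  Rpower y q <= / (1 - q * (y - 1)).
Proof.
  intros Hy Hq Hlt. unfold Rpower.
  apply Rle_trans with (exp (q * (y - 1))); [|apply exp_le_inv_one_sub, Hlt].
  assert (Hln : ln y <= y - 1)
    by (pose proof (exp_ineq1_le (ln y)); rewrite exp_ln in *; lra).
  destruct (Rle_lt_or_eq_dec _ _ (Rmult_le_compat_l q _ _ Hq Hln)) as [Hlt' | Heq].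
  - apply Rlt_le, exp_increasing, Hlt'.
  - rewrite Heq. apply Rle_refl.
Qed.

Definition xcoth (x : R) : R := x * cosh x / sinh x.

Definition kappa (x : R) : R := x ^ 3 * cosh x / sinh x ^ 3.

Lemma xcoth_pos x : 0 < x -> 0 < xcoth x.
Proof.
  intros Hx. pose proof (sinh_pos x Hx). pose proof (cosh_pos x).
  unfold xcoth. apply Rdiv_lt_0_compat; nra.
Qed.

Lemma xcoth_sub_1 x : 0 < x -> xcoth x - 1 = (x * cosh x - sinh x) / sinh x.
Proof. intros Hx. pose proof (sinh_pos x Hx). unfold xcoth. field. lra. Qed.

Lemma one_sub_kappa x : 0 < x -> 1 - kappa x = (sinh x ^ 3 - x ^ 3 * cosh x) / sinh x ^ 3.
Proof. intros Hx. pose proof (sinh_pos x Hx). unfold kappa. field. lra. Qed.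

Lemma xcoth_gt_1 x : 0 < x -> 1 < xcoth x.
Proof.
  intros Hx. cut (0 < xcoth x - 1); [lra|].
  rewrite xcoth_sub_1 by exact Hx.
  apply Rdiv_lt_0_compat; [pose proof (sinh_lt_x_cosh x Hx); lra | apply sinh_pos, Hx].
Qed.

Lemma xcoth_sub_1_le x : 0 < x -> xcoth x - 1 <= x ^ 2 / 3.
Proof.
  intros Hx. pose proof (sinh_pos x Hx). pose proof (x_cosh_sub_sinh_le x Hx).
  rewrite xcoth_sub_1 by exact Hx.
  apply (Rmult_le_reg_r (sinh x)); [assumption|].
  unfold Rdiv. rewrite Rmult_assoc, Rinv_l by lra. nra.
Qed.

Lemma kappa_pos x : 0 < x -> 0 < kappa x.
Proof.
  intros Hx. pose proof (sinh_pos x Hx). pose proof (cosh_pos x).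
  unfold kappa. apply Rdiv_lt_0_compat; [apply Rmult_lt_0_compat; [apply pow_lt|] | apply pow_lt];
    assumption.
Qed.

Lemma kappa_lt_1 x : 0 < x -> kappa x < 1.
Proof.
  intros Hx. cut (0 < 1 - kappa x); [lra|].
  rewrite one_sub_kappa by exact Hx. pose proof (sinh_cube_sub_ge x Hx).
  assert (0 < x ^ 7) by (apply pow_lt, Hx).
  apply Rdiv_lt_0_compat; [lra | apply pow_lt, sinh_pos, Hx].
Qed.

Lemma one_sub_kappa_lt x : 0 < x -> 5 * (1 - kappa x) < 3 * (xcoth x - 1) ^ 2.
Proof.
  intros Hx. pose proof (sinh_pos x Hx) as Hs. pose proof (sinh_cube_sub_lt x Hx).
  rewrite one_sub_kappa, xcoth_sub_1 by exact Hx.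
  assert (Hs3 : 0 < sinh x ^ 3) by (apply pow_lt, Hs).
  apply (Rmult_lt_reg_r (sinh x ^ 3)); [exact Hs3|].
  replace (5 * ((sinh x ^ 3 - x ^ 3 * cosh x) / sinh x ^ 3) * sinh x ^ 3)
    with (5 * (sinh x ^ 3 - x ^ 3 * cosh x)) by (field; lra).
  replace (3 * ((x * cosh x - sinh x) / sinh x) ^ 2 * sinh x ^ 3)
    with (3 * sinh x * (x * cosh x - sinh x) ^ 2) by (field; lra).
  assumption.
Qed.

(* Uses [sinh x <= x cosh x <= x exp x <= x / (1 - x)]. *)
Lemma one_sub_kappa_ge x : 0 < x < 1 -> x ^ 4 * (1 - x) ^ 3 / 15 <= 1 - kappa x.
Proof.
  intros [Hx Hx1]. pose proof (sinh_pos x Hx) as Hs. pose proof (sinh_cube_sub_ge x Hx).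
  assert (Hcosh : cosh x <= / (1 - x)).
  { apply Rle_trans with (exp x); [|apply exp_le_inv_one_sub, Hx1].
    unfold cosh. pose proof (exp_increasing (- x) x ltac:(lra)). lra. }
  assert (Hsinh : sinh x <= x / (1 - x)).
  { apply Rle_trans with (x * cosh x); [apply Rlt_le, sinh_lt_x_cosh, Hx|].
    apply Rmult_le_compat_l; lra. }
  assert (Hsinh3 : sinh x ^ 3 * (1 - x) ^ 3 <= x ^ 3).
  { rewrite <- Rpow_mult_distr. apply pow_incr. split; [apply Rmult_le_pos; lra|].
    apply (Rmult_le_compat_r (1 - x)) in Hsinh; [|lra].
    replace (x / (1 - x) * (1 - x)) with x in Hsinh by (field; lra). exact Hsinh. }
  rewrite one_sub_kappa by exact Hx.
  assert (Hs3 : 0 < sinh x ^ 3) by (apply pow_lt, Hs).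
  apply (Rmult_le_reg_r (sinh x ^ 3)); [exact Hs3|].
  replace ((sinh x ^ 3 - x ^ 3 * cosh x) / sinh x ^ 3 * sinh x ^ 3)
    with (sinh x ^ 3 - x ^ 3 * cosh x) by (field; lra).
  assert (0 <= x ^ 4) by (apply pow_le; lra).
  replace (x ^ 7) with (x ^ 4 * x ^ 3) in * by ring.
  assert (x ^ 4 * (sinh x ^ 3 * (1 - x) ^ 3) <= x ^ 4 * x ^ 3)
    by (apply Rmult_le_compat_l; assumption).
  nra.
Qed.

Lemma two_div_lt_iff Z Kp : 0 < Z ->
  (2 * / Z < Kp / Z ^ 2 + 1 <-> 1 - Kp < (Z - 1) ^ 2).
Proof.
  intros HZ. assert (HZ2 : 0 < Z ^ 2) by (apply pow_lt, HZ).
  replace (2 * / Z) with ((2 * Z) / Z ^ 2) by (field; lra).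
  replace (Kp / Z ^ 2 + 1) with ((Kp + Z ^ 2) / Z ^ 2) by (field; lra).
  split; intros H.
  - apply (Rmult_lt_compat_r (Z ^ 2)) in H; [|exact HZ2].
    unfold Rdiv in H. rewrite !Rmult_assoc, !Rinv_l in H by lra. nra.
  - apply Rmult_lt_compat_r; [apply Rinv_0_lt_compat, HZ2 | nra].
Qed.

Lemma inequality_iff x p : 0 < x ->
  (2 * Rpower (tanh x / x) p < Rpower (x / sinh x) (4 * p) + 1 <->
   1 - Rpower (kappa x) (2 * p) < (Rpower (xcoth x) p - 1) ^ 2).
Proof.
  intros Hx. pose proof (sinh_pos x Hx) as Hs. pose proof (cosh_pos x) as Hc.
  pose proof (xcoth_pos x Hx) as HY. pose proof (kappa_pos x Hx) as HK.
  assert (Htanh : tanh x / x = / xcoth x) by (unfold xcoth, tanh; field; lra).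
  assert (Hsq : Rpower (x / sinh x) (4 * p) =
                Rpower (kappa x) (2 * p) / Rpower (xcoth x) p ^ 2).
  { assert (Hln : ln (kappa x) = ln (xcoth x) + 2 * ln (x / sinh x)).
    { replace (kappa x) with (xcoth x * (x / sinh x) ^ 2)
        by (unfold kappa, xcoth; field; lra).
      assert (Hxs : 0 < x / sinh x) by (apply Rdiv_lt_0_compat; assumption).
      rewrite ln_mult, ln_pow by (try apply pow_lt; assumption).
      simpl INR. ring. }
    unfold Rpower. rewrite Hln.
    replace (2 * p * (ln (xcoth x) + 2 * ln (x / sinh x)))
      with (4 * p * ln (x / sinh x) + p * ln (xcoth x) + p * ln (xcoth x)) by ring.
    rewrite !exp_plus. field. apply Rgt_not_eq, exp_pos. }
  rewrite Htanh, Rpower_inv, Hsq by exact HY.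
  apply two_div_lt_iff. unfold Rpower. apply exp_pos.
Qed.

Lemma inequality_neg x p : 0 < x -> p < 0 ->
  2 * Rpower (tanh x / x) p < Rpower (x / sinh x) (4 * p) + 1.
Proof.
  intros Hx Hp. apply inequality_iff; [exact Hx|].
  assert (Hln : ln (kappa x) < 0)
    by (rewrite <- ln_1; apply ln_increasing; [apply kappa_pos | apply kappa_lt_1]; exact Hx).
  assert (1 < Rpower (kappa x) (2 * p))
    by (unfold Rpower; rewrite <- exp_0; apply exp_increasing; nra).
  pose proof (pow2_ge_0 (Rpower (xcoth x) p - 1)). lra.
Qed.

Lemma inequality_ge_6_5 x p : 0 < x -> 6 / 5 <= p ->
  2 * Rpower (tanh x / x) p < Rpower (x / sinh x) (4 * p) + 1.
Proof.
  intros Hx Hp. apply inequality_iff; [exact Hx|].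
  pose proof (xcoth_gt_1 x Hx) as HY. pose proof (kappa_pos x Hx) as HK.
  pose proof (one_sub_kappa_lt x Hx) as Hgap.
  pose proof (Rpower_ge_bernoulli (xcoth x) p ltac:(lra) ltac:(lra)) as HZ.
  pose proof (Rpower_ge_bernoulli (kappa x) (2 * p) HK ltac:(lra)) as HKp.
  set (Y := xcoth x) in *. set (K := kappa x) in *.
  assert (Hsq : (p * (Y - 1)) ^ 2 <= (Rpower Y p - 1) ^ 2)
    by (apply pow_incr; split; nra).
  assert (p * (6 / 5) * (Y - 1) ^ 2 <= p * p * (Y - 1) ^ 2)
    by (apply Rmult_le_compat_r; [apply pow2_ge_0 | apply Rmult_le_compat_l; lra]).
  assert (2 * p * (1 - K) < p * (6 / 5) * (Y - 1) ^ 2) by nra.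
  replace ((p * (Y - 1)) ^ 2) with (p * p * (Y - 1) ^ 2) in Hsq by ring.
  lra.
Qed.

Lemma counterexample_arith p : 0 < p < 6 / 5 ->
  let x := (6 / 5 - p) / 5 in
  let v := p * x ^ 2 / 3 in
  let w := 2 * p * x ^ 4 * (1 - x) ^ 3 / 15 in
  v ^ 2 * (1 + w) <= w * (1 - v) ^ 2.
Proof.
  intros [Hp0 Hp1] x v w.
  assert (Hx0 : 0 < x) by (unfold x; lra).
  assert (Hx1 : x <= 6 / 25) by (unfold x; lra).
  assert (Hpx : p = 6 / 5 - 5 * x) by (unfold x; lra).
  assert (Hx4 : 0 < x ^ 4) by (apply pow_lt; lra).
  assert (Hv0 : 0 <= v) by (unfold v; apply Rmult_le_pos; [apply Rmult_le_pos|]; nra).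
  assert (Hv1 : v <= 2 * x ^ 2 / 5) by (unfold v; nra).
  assert (Hxx : x ^ 2 <= 6 / 25 * x) by (simpl; nra).
  assert (Hc3 : 1 - 3 * x <= (1 - x) ^ 3) by (simpl; nra).
  assert (Hc3u : (1 - x) ^ 3 <= 1) by (simpl; nra).
  assert (Hx4b : x ^ 4 <= x) by (simpl; nra).
  assert (Hw0 : 0 <= w)
    by (unfold w; apply Rmult_le_pos; [apply Rmult_le_pos; [nra | apply pow_le] |]; lra).
  assert (Hw1 : w <= 4 * x / 25) by (unfold w; nra).
  assert (Hv2 : 1 - 2 * v <= (1 - v) ^ 2) by (simpl; nra).
  assert (Hpx4 : 0 < p * x ^ 4) by nra.
  assert (Hreduced : p / 9 * (1 + w) <= 2 * (1 - x) ^ 3 / 15 * (1 - v) ^ 2).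
  { assert ((1 - 3 * x) * (1 - 2 * v) <= (1 - x) ^ 3 * (1 - v) ^ 2)
      by (apply Rmult_le_compat; lra).
    assert (p * w <= 6 / 5 * (4 * x / 25)) by nra.
    nra. }
  replace (v ^ 2 * (1 + w)) with (p * x ^ 4 * (p / 9 * (1 + w))) by (unfold v; field).
  replace (w * (1 - v) ^ 2) with (p * x ^ 4 * (2 * (1 - x) ^ 3 / 15 * (1 - v) ^ 2))
    by (unfold w; field).
  apply Rmult_le_compat_l; lra.
Qed.

Lemma sq_sub_1_le_of_bounds Z Kp v w : 0 <= v < 1 -> 0 <= w ->
  1 <= Z <= / (1 - v) -> Kp <= / (1 + w) ->
  v ^ 2 * (1 + w) <= w * (1 - v) ^ 2 -> (Z - 1) ^ 2 <= 1 - Kp.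
Proof.
  intros [Hv0 Hv1] Hw [HZ1 HZ2] HKp Harith.
  assert (HZ : (Z - 1) ^ 2 <= (v / (1 - v)) ^ 2).
  { apply pow_incr. split; [lra|].
    replace (v / (1 - v)) with (/ (1 - v) - 1) by (field; lra). lra. }
  assert (HK : w / (1 + w) <= 1 - Kp)
    by (replace (w / (1 + w)) with (1 - / (1 + w)) by (field; lra); lra).
  assert (Hratio : (v / (1 - v)) ^ 2 <= w / (1 + w)).
  { assert (0 < (1 - v) ^ 2) by (apply pow_lt; lra).
    apply (Rmult_le_reg_r ((1 - v) ^ 2 * (1 + w))); [apply Rmult_lt_0_compat; lra|].
    replace ((v / (1 - v)) ^ 2 * ((1 - v) ^ 2 * (1 + w))) with (v ^ 2 * (1 + w))
      by (field; lra).
    replace (w / (1 + w) * ((1 - v) ^ 2 * (1 + w))) with (w * (1 - v) ^ 2)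
      by (field; lra).
    exact Harith. }
  lra.
Qed.

Lemma inequality_fails_lt_6_5 p : 0 < p < 6 / 5 ->
  let x := (6 / 5 - p) / 5 in
  ~ (2 * Rpower (tanh x / x) p < Rpower (x / sinh x) (4 * p) + 1).
Proof.
  intros Hp x. pose proof (counterexample_arith p Hp) as Harith. cbv zeta in Harith.
  fold x in Harith.
  assert (Hx0 : 0 < x) by (unfold x; lra).
  assert (Hx1 : x <= 6 / 25) by (unfold x; lra).
  rewrite (inequality_iff x p Hx0). apply Rle_not_lt.
  pose proof (xcoth_gt_1 x Hx0) as HY. pose proof (kappa_pos x Hx0) as HK.
  pose proof (kappa_lt_1 x Hx0) as HK1.
  pose proof (xcoth_sub_1_le x Hx0) as HYle.
  pose proof (one_sub_kappa_ge x ltac:(lra)) as HKge.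
  assert (Hx2 : 0 < x ^ 2) by (apply pow_lt, Hx0).
  assert (Hx4 : 0 <= x ^ 4 * (1 - x) ^ 3) by (apply Rmult_le_pos; apply pow_le; lra).
  set (v := p * x ^ 2 / 3) in Harith. set (w := 2 * p * x ^ 4 * (1 - x) ^ 3 / 15) in Harith.
  assert (Hv : 0 <= v < 1) by (unfold v; split; [|simpl]; nra).
  assert (Hw : 0 <= w) by (unfold w; nra).
  assert (HZlow : 1 <= Rpower (xcoth x) p).
  { rewrite <- (Rpower_O (xcoth x)) by lra. apply Rle_Rpower; lra. }
  assert (HZup : Rpower (xcoth x) p <= / (1 - v)).
  { apply Rle_trans with (/ (1 - p * (xcoth x - 1))).
    - apply Rpower_le_inv; try lra. simpl in HYle |- *. nra.
    - apply Rinv_le_contravar; unfold v; [simpl; nra | nra]. }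
  assert (HKup : Rpower (kappa x) (2 * p) <= / (1 + w)).
  { apply Rle_trans with (/ (1 - 2 * p * (kappa x - 1))).
    - apply Rpower_le_inv; nra.
    - apply Rinv_le_contravar; unfold w; nra. }
  exact (sq_sub_1_le_of_bounds _ _ v w Hv Hw (conj HZlow HZup) HKup Harith).
Qed.

Theorem proposition4p14 (p : R) (hp : p <> 0) :
  (forall x : R, 0 < x < PI / 2 ->
     2 * Rpower (tanh x / x) p < Rpower (x / sinh x) (4 * p) + 1)
  <-> (p < 0 \/ 6 / 5 <= p).
Proof.
  split.
  - intros Hall.
    destruct (Rlt_le_dec p 0) as [Hneg|Hnonneg]; [left; exact Hneg|].
    destruct (Rle_lt_dec (6 / 5) p) as [Hbig|Hsmall]; [right; exact Hbig|].
    exfalso. apply (inequality_fails_lt_6_5 p ltac:(lra)).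
    apply Hall. pose proof PI2_1. lra.
  - intros [Hneg|Hbig] x [Hx _].
    + apply inequality_neg; assumption.
    + apply inequality_ge_6_5; assumption.
Qed.
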